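(* Let $\mathbb{X}^0,\mathbb{X}^1$ be $0$-dimensional Polish spaces and $\mathbb{A}^0,\mathbb{A}^1$ disjoint subsets of $\mathbb{X}^0\times\mathbb{X}^1$. The following are equivalent: (a) for all Polish spaces $X,Y$ and all disjoint $A_0,A_1\subseteq X\times Y$, if no countable union of rectangles $U\times V$ ($U$ open in $X$, $V$ open in $Y$) contains $A_0$ and is disjoint from $A_1$, then there are continuous $f:\mathbb{X}^0\to X$, $g:\mathbb{X}^1\to Y$ with $(f\times g)(\mathbb{A}^0)\subseteq A_0$ and $(f\times g)(\mathbb{A}^1)\subseteq A_1$; (b) for each $\varepsilon\in2$ there is a sequence $(C^\varepsilon_i)_{i\in\omega}$ of pairwise disjoint clopen subsets of $\mathbb{X}^\varepsilon$ such that $\mathbb{A}^1\subseteq\bigcup_{i\in\omega}C^0_i\times C^1_i$ and $\mathbb{A}^0\subseteq\big(\mathbb{X}^0\setminus\bigcup_{i}C^0_i\big)\times\big(\mathbb{X}^1\setminus\bigcup_iC^1_i\big)$.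
   Context: $(f\times g)(x,y)=(f(x),g(y))$. *)

From Stdlib Require Import Reals.
From mathcomp Require Import all_boot all_order.
From mathcomp Require Import all_classical.
From mathcomp Require Import topology.

Set Implicit Arguments. Unset Strict Implicit. Unset Printing Implicit Defensive.
Local Open Scope classical_set_scope.

Definition polish (T : topologicalType) : Prop :=
  exists d : T -> T -> R,
    (forall x y, Rle R0 (d x y)) /\
    (forall x y, d x y = R0 <-> x = y) /\
    (forall x y, d x y = d y x) /\
    (forall x y z, Rle (d x z) (Rplus (d x y) (d y z))) /\
    (forall U : set T, open U <->
       (forall x, U x -> exists e, Rlt R0 e /\ forall y, Rlt (d x y) e -> U y)) /\
    (forall u : nat -> T,
       (forall e, Rlt R0 e -> exists N, forall m n, (N <= m)%N -> (N <= n)%N ->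
          Rlt (d (u m) (u n)) e) ->
       exists x, forall e, Rlt R0 e -> exists N, forall n, (N <= n)%N ->
          Rlt (d (u n) x) e) /\
    (exists D : set T, countable D /\
       forall x e, Rlt R0 e -> exists y, D y /\ Rlt (d x y) e).

Definition zero_dim (T : topologicalType) : Prop :=
  forall (U : set T) (x : T), open U -> U x ->
    exists V : set T, [/\ clopen V, V x & V `<=` U].

(* (a) -> (b): apply (a) to [omega + 1] with A0 = {(omega, omega)} and A1 the
   diagonal {(n, n)}. As (omega, omega) is a limit of the diagonal, no countable
   union of open rectangles separates them, so (a) yields continuous f and g,
   and the fibres f^-1{n}, g^-1{n} are the required clopen sets.
   (b) -> (a): in spaces with a countable basis, if A0 is not separated from A1
   by countably many open rectangles, some (a, b) in A0 is the limit of points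
   (a_n, b_n) of A1. Send C^0_n to a_n and the rest of X^0 to a, and likewise
   on X^1; at points outside all C^0_n continuity holds because a_n -> a and
   the union of finitely many C^0_n is closed. *)

From Stdlib Require Import Reals Lra Lia.
From mathcomp Require Import all_boot all_order all_classical topology.
From HB Require Import structures.

Set Implicit Arguments. Unset Strict Implicit. Unset Printing Implicit Defensive.
Local Open Scope classical_set_scope.

Lemma inv_succ_gt0 (n : nat) : Rlt R0 (Rinv (INR n.+1)).
Proof. exact/Rinv_0_lt_compat/lt_0_INR/Nat.lt_0_succ. Qed.

Lemma inv_succ_lt_eventually (e : R) : Rlt R0 e ->
  exists N : nat, forall n, (N <= n)%N -> Rlt (Rinv (INR n.+1)) e.
Proof.
move=> e_gt0; have [N [lt_invN_e N_gt0]] := archimed_cor1 e e_gt0.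
exists N => n /leP le_Nn; apply: Rle_lt_trans lt_invN_e.
apply: Rinv_le_contravar; first exact: lt_0_INR.
apply: le_INR; lia.
Qed.

Lemma basis_rangeP (T : topologicalType) (B : nat -> set T) :
  basis (range B) <-> (forall n, open (B n)) /\
    forall x W, nbhs x W -> exists2 n, B n x & B n `<=` W.
Proof.
split=> [[Bopen Bnbhs]|[Bopen Bnbhs]].
  split=> [n|x W /Bnbhs [U [[n _ <-] Bnx] BnW]]; first by apply: Bopen; exists n.
  by exists n.
split=> [_ [n _ <-]|x W /Bnbhs [n Bnx BnW]]; first exact: Bopen.
by exists (B n) => //; split=> //; exists n.
Qed.

Lemma polish_basis (T : topologicalType) :
  polish T -> exists B : nat -> set T, basis (range B).
Proof.
move=> [d [_ [_ [dC [d_tri [d_open [_ [D [D_countable D_dense]]]]]]]]].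
have [code code_inj] := countable_injP _ D_countable.
pose r (m : nat) := Rinv (INR m.+1).
pose decode (k : nat) : nat * nat := odflt (0, 0)%N (unpickle k).
(* [B (pickle (code p, m))] is the ball of radius [1/(m+1)] about [p \in D] *)
pose B k := [set y | exists2 p, D p /\ code p = (decode k).1 &
                                 Rlt (d p y) (r (decode k).2)].
exists B; apply/basis_rangeP; split=> [k|x W].
  apply/d_open => y [p Dp dpy].
  exists (Rminus (r (decode k).2) (d p y)); split; first lra.
  by move=> z dyz; exists p => //; have := d_tri p y z; lra.
rewrite nbhsE => -[U [/d_open U_open Ux] UW].
have [e [e_gt0 ballU]] := U_open x Ux.
have half_e_gt0 : Rlt R0 (Rmult e (Rinv 2)) by lra.
have [m small_m] := inv_succ_lt_eventually half_e_gt0.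
have rm_small := small_m m (leqnn m); rewrite -/(r m) in rm_small.
have [p [Dp dxp]] := D_dense x (r m) (inv_succ_gt0 m).
have decodeE : decode (pickle (code p, m)) = (code p, m) by rewrite /decode pickleK.
exists (pickle (code p, m)); rewrite /B decodeE /=.
  by exists p => //; rewrite dC.
move=> y [q [Dq code_qp] dqy].
have qp : q = p by apply: code_inj; rewrite ?inE.
by apply/UW/ballU; rewrite qp in dqy; have := d_tri x p y; lra.
Qed.

Lemma basis_nbhs_seq (T : topologicalType) (B : nat -> set T) :
  basis (range B) -> forall x : T, exists N : nat -> set T,
    (forall n, nbhs x (N n)) /\ forall W, nbhs x W -> \forall n \near \oo, N n `<=` W.
Proof.
move=> /basis_rangeP [B_open B_nbhs] x.
exists (fun n => [set y | forall k, (k < n)%N -> B k x -> B k y]); split.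
  elim=> [|n IH]; first by apply: filterS filterT => y _ [].
  have Bn : nbhs x [set y | B n x -> B n y].
    have [Bnx|nBnx] := pselect (B n x).
      by apply: filterS (open_nbhs_nbhs (conj (B_open n) Bnx)) => y Bny _.
    by apply: filterS filterT => y _ /nBnx.
  apply: filterS (filterI IH Bn) => y [Ny Bny] k.
  by rewrite ltnS leq_eqVlt => /orP [/eqP -> //|]; apply: Ny.
move=> W /B_nbhs [k Bkx BkW]; exists k.+1 => // n /= lt_kn y Ny.
exact/BkW/Ny.
Qed.

Section RectSeparation.
Variables X Y : topologicalType.

Definition rect_separable (A0 A1 : set (X * Y)) : Prop :=
  exists (U : nat -> set X) (V : nat -> set Y),
    (forall i, open (U i) /\ open (V i)) /\
    A0 `<=` \bigcup_i (U i `*` V i) /\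
    (\bigcup_i (U i `*` V i)) `&` A1 = set0.

Lemma not_rect_separable_point (BX : nat -> set X) (BY : nat -> set Y)
    (A0 A1 : set (X * Y)) :
  basis (range BX) -> basis (range BY) -> ~ rect_separable A0 A1 ->
  exists2 p, A0 p & forall U V, nbhs p.1 U -> nbhs p.2 V ->
    exists q, [/\ A1 q, U q.1 & V q.2].
Proof.
move=> /basis_rangeP [BX_open BX_nbhs] /basis_rangeP [BY_open BY_nbhs] not_sep.
apply: contrapT => no_point; apply: not_sep.
pose decode (k : nat) : nat * nat := odflt (0, 0)%N (unpickle k).
pose good k := (BX (decode k).1 `*` BY (decode k).2) `&` A1 = set0.
exists (fun k => if `[< good k >] then BX (decode k).1 else set0).
exists (fun k => if `[< good k >] then BY (decode k).2 else set0).
split=> [k|]; first by case: ifP => _; split; by [apply: BX_open | apply: BY_open | apply: open0].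
split; last first.
  apply/seteqP; split=> // q [[k _]]; case: ifP => [/asboolP gk|_ []//].
  by move=> Bq A1q; rewrite -gk.
move=> p A0p; apply: contrapT => p_uncovered; apply: no_point; exists p => //.
move=> U V /BX_nbhs [k1 Bk1p Bk1U] /BY_nbhs [k2 Bk2p Bk2V].
apply: contrapT => no_q; apply: p_uncovered; exists (pickle (k1, k2)) => //.
have decodeE : decode (pickle (k1, k2)) = (k1, k2) by rewrite /decode pickleK.
have good_k : good (pickle (k1, k2)).
  rewrite /good decodeE; apply/seteqP; split=> // q [[/= Bq1 Bq2] A1q].
  by apply: no_q; exists q; split; [| exact: Bk1U | exact: Bk2V].
by rewrite asboolT // decodeE.
Qed.

Lemma not_rect_separable_cvg (A0 A1 : set (X * Y)) :
  polish X -> polish Y -> ~ rect_separable A0 A1 ->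
  exists a b (u : nat -> X) (v : nat -> Y),
    [/\ A0 (a, b), forall n, A1 (u n, v n), u @ \oo --> a & v @ \oo --> b].
Proof.
move=> /polish_basis [BX BX_basis] /polish_basis [BY BY_basis] not_sep.
have [[a b] A0ab ab_limit] := not_rect_separable_point BX_basis BY_basis not_sep.
have [NX [NX_nbhs NX_cvg]] := basis_nbhs_seq BX_basis a.
have [NY [NY_nbhs NY_cvg]] := basis_nbhs_seq BY_basis b.
have [s sP] := choice (fun n => ab_limit (NX n) (NY n) (NX_nbhs n) (NY_nbhs n)).
exists a, b, (fun n => (s n).1), (fun n => (s n).2); split.
- exact: A0ab.
- by move=> n; case: (sP n); case: (s n).
- move=> W /NX_cvg; apply: filterS => n; apply; by case: (sP n).
- move=> W /NY_cvg; apply: filterS => n; apply; by case: (sP n).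
Qed.

End RectSeparation.

Section Gluing.
Variables (T X : topologicalType) (C : nat -> set T) (u : nat -> X) (a : X).
Hypothesis C_clopen : forall i, clopen (C i).
Hypothesis C_disj : forall i j, i <> j -> C i `&` C j = set0.
Hypothesis u_cvg : u @ \oo --> a.

Definition glue (x : T) : X :=
  if pselect (exists i, C i x) is left h then u (proj1_sig (cid h)) else a.

Lemma glue_in i x : C i x -> glue x = u i.
Proof.
move=> Cix; rewrite /glue; case: pselect => [h|[]]; last by exists i.
case: (cid h) => j Cjx /=; apply: congr1; apply: contrapT => ji.
by have /seteqP[/(_ x) CjiS _] := C_disj ji; apply: CjiS.
Qed.

Lemma glue_out x : ~ (\bigcup_i C i) x -> glue x = a.
Proof. by move=> notC; rewrite /glue; case: pselect => // -[i Cix]; case: notC; exists i. Qed.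

Lemma glue_continuous : continuous glue.
Proof.
move=> x W /= W_gx.
have [[i Cix]|notC] := pselect (exists i, C i x).
  apply: filterS (open_nbhs_nbhs (conj (C_clopen i).1 Cix)) => y Ciy /=.
  by rewrite (glue_in Ciy) -(glue_in Cix); apply: nbhs_singleton.
rewrite glue_out in W_gx; last by move=> [i _ Cix]; apply: notC; exists i.
have [N _ uW] := u_cvg W_gx.
have F_closed : closed (\bigcup_(i in `I_N) C i).
  by apply: closed_bigcup => [|i _]; [exact: finite_II | exact: (C_clopen i).2].
have notF : ~ (\bigcup_(i in `I_N) C i) x by move=> [i _ Cix]; apply: notC; exists i.
apply: filterS (open_nbhs_nbhs (conj (closed_openC F_closed) notF)) => y notFy /=.
have [[i Ciy]|notCy] := pselect (exists i, C i y).
  rewrite (glue_in Ciy); apply: uW; rewrite /= leqNgt; apply/negP => iN.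
  by apply: notFy; exists i.
by rewrite glue_out; [apply: nbhs_singleton | move=> [i _ Ciy]; apply: notCy; exists i].
Qed.

End Gluing.

(* The space [omega + 1]: [Some n] is the isolated point [n] and [None] the
   limit point [omega], under the ultrametric [d x y = max (h x) (h y)]
   ([x <> y]) with [h n = 1/(n+1)] and [h omega = 0]. *)
Definition onat := option nat.
HB.instance Definition _ := Choice.on onat.

Definition onat_height (x : onat) : R :=
  if x is Some n then Rinv (INR n.+1) else R0.

Definition onat_dist (x y : onat) : R :=
  if x == y then R0 else Rmax (onat_height x) (onat_height y).

Lemma onat_height_ge0 x : Rle R0 (onat_height x).
Proof. by case: x => [n|] /=; [apply/Rlt_le/inv_succ_gt0 | lra]. Qed.

Lemma onat_height_Some_gt0 n : Rlt R0 (onat_height (Some n)).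
Proof. exact: inv_succ_gt0. Qed.

Lemma onat_distxx x : onat_dist x x = R0.
Proof. by rewrite /onat_dist eqxx. Qed.

Lemma onat_distC x y : onat_dist x y = onat_dist y x.
Proof. by rewrite /onat_dist eq_sym; case: eqP => // _; apply: Rmax_comm. Qed.

Lemma onat_dist_neq x y : x <> y ->
  onat_dist x y = Rmax (onat_height x) (onat_height y).
Proof. by rewrite /onat_dist => /eqP/negbTE ->. Qed.

Lemma onat_dist_ge_height x y : x <> y -> Rle (onat_height x) (onat_dist x y).
Proof. by move=> /onat_dist_neq ->; apply: Rmax_l. Qed.

Lemma onat_dist_None x : onat_dist x None = onat_height x.
Proof.
case: x => [n|]; last exact: onat_distxx.
by rewrite onat_dist_neq // Rmax_left //; apply: onat_height_ge0.
Qed.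

Lemma onat_dist_ge0 x y : Rle R0 (onat_dist x y).
Proof.
have [->|/eqP xy] := eqVneq x y; first by rewrite onat_distxx; lra.
by apply: Rle_trans (onat_dist_ge_height xy); apply: onat_height_ge0.
Qed.

Lemma onat_dist_lt_height x y : Rlt (onat_dist x y) (onat_height x) -> y = x.
Proof.
move=> lt_d_h; apply: contrapT => yx.
by have := onat_dist_ge_height (nesym yx); lra.
Qed.

Lemma onat_dist_eq0 x y : onat_dist x y = R0 <-> x = y.
Proof.
split=> [d0|->]; last exact: onat_distxx.
apply: contrapT; case: x d0 => [m|] d0 xy.
  by have := onat_dist_ge_height xy; have := onat_height_Some_gt0 m; lra.
case: y d0 xy => [n|] // d0 xy.
have := onat_dist_ge_height (nesym xy); rewrite onat_distC.
by have := onat_height_Some_gt0 n; lra.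
Qed.

Lemma onat_dist_triangle x y z :
  Rle (onat_dist x z) (Rplus (onat_dist x y) (onat_dist y z)).
Proof.
have := onat_dist_ge0 x y; have := onat_dist_ge0 y z.
have [->|/eqP xz] := eqVneq x z; first by rewrite onat_distxx; lra.
have [<-|/eqP xy] := eqVneq x y; first by rewrite onat_distxx; lra.
have [->|/eqP yz] := eqVneq y z; first by rewrite onat_distxx; lra.
have := onat_dist_ge_height xy; rewrite (onat_distC y z).
have := onat_dist_ge_height (nesym yz); rewrite (onat_dist_neq xz).
by move=> *; apply: Rmax_lub; lra.
Qed.

Definition onat_open (U : set onat) : Prop :=
  forall x, U x -> exists e, Rlt R0 e /\ forall y, Rlt (onat_dist x y) e -> U y.

Lemma onat_openT : onat_open setT.
Proof. by move=> x _; exists R1; split; [lra|]. Qed.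

Lemma onat_openI : setI_closed onat_open.
Proof.
move=> A B oA oB x [Ax Bx].
have [e1 [e1_gt0 ballA]] := oA x Ax; have [e2 [e2_gt0 ballB]] := oB x Bx.
exists (Rmin e1 e2); split; first exact: Rmin_pos.
move=> y dxy; have := Rmin_l e1 e2; have := Rmin_r e1 e2.
by split; [apply: ballA | apply: ballB]; lra.
Qed.

Lemma onat_open_bigcup (I : Type) (f : I -> set onat) :
  (forall i, onat_open (f i)) -> onat_open (\bigcup_i f i).
Proof.
move=> of_ x [i _ fix_]; have [e [e_gt0 ball_i]] := of_ i x fix_.
by exists e; split=> // y /ball_i; exists i.
Qed.

HB.instance Definition _ :=
  isOpenTopological.Build onat onat_openT onat_openI onat_open_bigcup.

Lemma onat_cauchy_cvg (u : nat -> onat) :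
  (forall e, Rlt R0 e -> exists N, forall m n, (N <= m)%N -> (N <= n)%N ->
     Rlt (onat_dist (u m) (u n)) e) ->
  exists x, forall e, Rlt R0 e -> exists N, forall n, (N <= n)%N ->
     Rlt (onat_dist (u n) x) e.
Proof.
move=> u_cauchy.
have [[N [c u_cst]]|u_ncst] :=
  pselect (exists N c, forall n, (N <= n)%N -> u n = c).
  by exists c => e e_gt0; exists N => n /u_cst ->; rewrite onat_distxx.
(* a non-eventually-constant Cauchy sequence converges to [omega]: each
   [u n] differs from a later term, so [h (u n)] is below the Cauchy bound *)
exists None => e e_gt0; have [N u_close] := u_cauchy e e_gt0.
exists N => n le_Nn.
have [m [le_Nm umn]] : exists m, (N <= m)%N /\ u m <> u n.
  apply: contrapT => u_eq; apply: u_ncst; exists N, (u n) => m le_Nm.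
  by apply: contrapT => umn; apply: u_eq; exists m.
have := u_close n m le_Nn le_Nm; have := onat_dist_ge_height (nesym umn).
by rewrite onat_dist_None; lra.
Qed.

Lemma onat_polish : polish onat.
Proof.
exists onat_dist; split; first exact: onat_dist_ge0.
split; first exact: onat_dist_eq0.
split; first exact: onat_distC.
split; first exact: onat_dist_triangle.
split; first by [].
split; first exact: onat_cauchy_cvg.
exists setT; split; first exact/countableP.
by move=> x e e_gt0; exists x; rewrite onat_distxx.
Qed.

Lemma clopen_Some (n : nat) : clopen [set Some n : onat].
Proof.
have isolated_Some (m : nat) : open [set Some m : onat].
  move=> x /= ->; exists (onat_height (Some m)); split; first exact: onat_height_Some_gt0.
  by move=> y /onat_dist_lt_height.
split=> //; rewrite -openC; move=> [m|] /= n_neq.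
  have [e [e_gt0 ball_m]] := isolated_Some m (Some m) erefl.
  by exists e; split=> // y /ball_m ->.
exists (onat_height (Some n)); split; first exact: onat_height_Some_gt0.
move=> y dy yn; rewrite yn onat_distC in dy.
by move/onat_dist_lt_height: dy.
Qed.

Lemma Some_cvg_None : Some @ \oo --> (None : onat).
Proof.
move=> W; rewrite nbhsE => -[U [oU UNone] UW].
have [e [e_gt0 ballU]] := oU None UNone.
have [N small] := inv_succ_lt_eventually e_gt0.
exists N => // n le_Nn; apply/UW/ballU.
by rewrite onat_distC onat_dist_None; apply: small.
Qed.

Lemma onat_diagonal_not_rect_separable :
  ~ rect_separable [set (None, None) : onat * onat] (range (fun n => (Some n, Some n))).
Proof.
move=> [U [V [UV_open [cover disj]]]].
have [i _ [/= Ui Vi]] := cover (None, None) erefl.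
have U_near : \forall n \near \oo, U i (Some n).
  by apply: Some_cvg_None; apply: open_nbhs_nbhs; split=> //; case: (UV_open i).
have V_near : \forall n \near \oo, V i (Some n).
  by apply: Some_cvg_None; apply: open_nbhs_nbhs; split=> //; case: (UV_open i).
have [n [Uin Vin]] := filter_ex (filterI U_near V_near).
have /seteqP [/(_ (Some n, Some n)) diag_out _] := disj.
by apply: diag_out; split; [exists i | exists n].
Qed.

Lemma clopen_partition_reduction (X0 X1 X Y : topologicalType)
    (C0 : nat -> set X0) (C1 : nat -> set X1) (AA0 AA1 : set (X0 * X1))
    (A0 A1 : set (X * Y)) :
  (forall i, clopen (C0 i)) -> (forall i, clopen (C1 i)) ->
  (forall i j, i <> j -> C0 i `&` C0 j = set0) ->
  (forall i j, i <> j -> C1 i `&` C1 j = set0) ->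
  AA1 `<=` \bigcup_i (C0 i `*` C1 i) ->
  AA0 `<=` (~` \bigcup_i C0 i) `*` (~` \bigcup_i C1 i) ->
  polish X -> polish Y -> ~ rect_separable A0 A1 ->
  exists (f : X0 -> X) (g : X1 -> Y),
    continuous f /\ continuous g /\
    (forall x y, AA0 (x, y) -> A0 (f x, g y)) /\
    (forall x y, AA1 (x, y) -> A1 (f x, g y)).
Proof.
move=> C0_clopen C1_clopen C0_disj C1_disj AA1_sub AA0_sub X_polish Y_polish.
move=> /(not_rect_separable_cvg X_polish Y_polish) [a [b [u [v [A0ab A1uv u_cvg v_cvg]]]]].
exists (glue C0 u a), (glue C1 v b).
split; first exact: glue_continuous C0_clopen C0_disj u_cvg.
split; first exact: glue_continuous C1_clopen C1_disj v_cvg.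
split=> x y; first by move=> /AA0_sub [/= nC0x nC1y]; rewrite !glue_out.
move=> /AA1_sub [i _ [/= C0x C1y]].
by rewrite (glue_in _ _ C0_disj C0x) (glue_in _ _ C1_disj C1y).
Qed.

Theorem proposition3p9 (X0 X1 : topologicalType)
  (hX0 : polish X0) (hX1 : polish X1) (zX0 : zero_dim X0) (zX1 : zero_dim X1)
  (AA0 AA1 : set (X0 * X1)) (hAA : AA0 `&` AA1 = set0) :
  (forall (X Y : topologicalType), polish X -> polish Y ->
     forall A0 A1 : set (X * Y), A0 `&` A1 = set0 ->
     ~ (exists (U : nat -> set X) (V : nat -> set Y),
          (forall i, open (U i) /\ open (V i)) /\
          A0 `<=` \bigcup_i (U i `*` V i) /\
          (\bigcup_i (U i `*` V i)) `&` A1 = set0) ->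
     exists (f : X0 -> X) (g : X1 -> Y),
       continuous f /\ continuous g /\
       (forall x y, AA0 (x, y) -> A0 (f x, g y)) /\
       (forall x y, AA1 (x, y) -> A1 (f x, g y)))
  <->
  (exists (C0 : nat -> set X0) (C1 : nat -> set X1),
     (forall i, clopen (C0 i)) /\ (forall i, clopen (C1 i)) /\
     (forall i j, i <> j -> C0 i `&` C0 j = set0) /\
     (forall i j, i <> j -> C1 i `&` C1 j = set0) /\
     AA1 `<=` \bigcup_i (C0 i `*` C1 i) /\
     AA0 `<=` (~` \bigcup_i C0 i) `*` (~` \bigcup_i C1 i)).
Proof.
split=> [reduce|[C0 [C1 [C0_clopen [C1_clopen [C0_disj [C1_disj [AA1_sub AA0_sub]]]]]]]].
  have diag_disj : [set (None, None) : onat * onat] `&` range (fun n => (Some n, Some n)) = set0.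
    by apply/seteqP; split=> // p [-> [n _]].
  have [f [g [f_cont [g_cont [fg0 fg1]]]]] := reduce onat onat onat_polish onat_polish
    _ _ diag_disj onat_diagonal_not_rect_separable.
  exists (fun i => f @^-1` [set Some i]), (fun i => g @^-1` [set Some i]).
  do 2 (split; first by move=> i; apply: preimage_clopen (clopen_Some i) _).
  do 2 (split; first by move=> i j ij; apply/seteqP; split=> // x [/= -> [/ij]]).
  split; first by move=> [x y] /fg1 [n _ [fx gy]]; exists n; rewrite //= -fx -gy.
  by move=> [x y] /fg0 [fx gy]; split=> -[i _] /=; rewrite ?fx ?gy.
move=> X Y X_polish Y_polish A0 A1 _.
exact: clopen_partition_reduction.
Qed.
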